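(* Let $E$ be an $\mathbb{R}$-group, $X$ a locally compact (Hausdorff) space not reduced to one point, and $\mathcal{H}=(H_\varepsilon)_{\varepsilon\in E}$ a continuous absorptive action of $E$ on $X$ with center $\omega$. Then: (i) there is a neighbourhood base at $\omega$ consisting of balanced absorbent sets; (ii) a set $T\subset X$ is bounded if and only if it is relatively compact; (iii) elementary sets exist; moreover, if $F$ is an elementary set, then the sets $H_n(F)$, $n$ ranging over the positive integers (viewed as elements of $E$), form a neighbourhood base at $\omega$, and the sets $H_{n^{-1}}(F)$, $n$ ranging over the positive integers, cover $X$.
   Context: An $\mathbb{R}$-group is an abelian group $E$ (operation written multiplicatively) whose underlying set is a subset of $\mathbb{R}$ containing all positive integers, such that: (RG1) with the natural order of $\mathbb{R}$, $E$ is a totally ordered group; (RG2) with the topology induced from $\mathbb{R}$, $E$ is a locally compact group; (RG3) there is a nonconstant continuous homomorphism $h:E\to\mathbb{R}_+^*$ such that for every $\alpha\in E$ the set $\{\varepsilon\in E:\varepsilon\ge\alpha\}$ is integrable for $h\cdot m$, $m$ a Haar measure on $E$. $e$ is the identity of $E$, $\varepsilon^{-1}$ the group inverse, $\theta=\inf E\in\mathbb{R}\cup\{\pm\infty\}$; inequalities refer to the order of $\mathbb{R}$. An action of $E$ on $X$ is a family $\mathcal{H}=(H_\varepsilon)_{\varepsilon\in E}$ of bijections of $X$ with $H_\varepsilon\circ H_{\varepsilon'}=H_{\varepsilon\varepsilon'}$, $H_e=\mathrm{id}_X$; it is continuous if $(\varepsilon,x)\mapsto H_\varepsilon(x)$ is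 continuous on $E\times X$. It is absorptive if some $\omega\in X$ satisfies (ABS): for every neighbourhood $V$ of $\omega$ and every $x\in X$ there are a neighbourhood $U$ of $x$ and $\alpha\in E$ with $H_{\varepsilon^{-1}}(U)\subset V$ for all $\varepsilon\le\alpha$. For a continuous absorptive action such $\omega$ is unique and called the center. For $T,S\subset X$: $T$ absorbs $S$ if there is $\alpha\in E$ with $H_{\varepsilon^{-1}}(S)\subset T$ for all $\varepsilon\le\alpha$; $T$ is absorbent if it absorbs every singleton $\{x\}$, $x\in X$; $T$ is balanced if $H_{\varepsilon^{-1}}(T)\subset T$ for all $\varepsilon\le e$. $T$ is bounded if it is absorbed by every neighbourhood of the center $\omega$. $T$ is elementary if it is a balanced relatively compact neighbourhood of $\omega$. *)

From Stdlib Require Import Reals List.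
Open Scope R_scope.

Definition is_topology {X : Type} (op : (X -> Prop) -> Prop) : Prop :=
  op (fun _ => True) /\
  op (fun _ => False) /\
  (forall U V, op U -> op V -> op (fun x => U x /\ V x)) /\
  (forall (I : Type) (F : I -> X -> Prop),
      (forall i, op (F i)) -> op (fun x => exists i, F i x)) /\
  (forall U V, (forall x, U x <-> V x) -> op U -> op V).

Definition tnbhd {X : Type} (op : (X -> Prop) -> Prop) (V : X -> Prop) (x : X) : Prop :=
  exists U, op U /\ U x /\ forall y, U y -> V y.

Definition tcompact {X : Type} (op : (X -> Prop) -> Prop) (K : X -> Prop) : Prop :=
  forall (I : Type) (U : I -> X -> Prop),
    (forall i, op (U i)) ->
    (forall x, K x -> exists i, U i x) ->
    exists l : list I, forall x, K x -> exists i, In i l /\ U i x.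

Definition tclosure {X : Type} (op : (X -> Prop) -> Prop) (S : X -> Prop) (x : X) : Prop :=
  forall V, tnbhd op V x -> exists y, V y /\ S y.

Definition relatively_compact {X : Type} (op : (X -> Prop) -> Prop) (S : X -> Prop) : Prop :=
  tcompact op (tclosure op S).

Definition hausdorff {X : Type} (op : (X -> Prop) -> Prop) : Prop :=
  forall x y, x <> y -> exists U V, op U /\ op V /\ U x /\ V y /\
    forall z, U z -> V z -> False.

(* Bourbaki convention: locally compact includes Hausdorff *)
Definition locally_compact {X : Type} (op : (X -> Prop) -> Prop) : Prop :=
  hausdorff op /\ forall x, exists K, tcompact op K /\ tnbhd op K x.

Definition prod_top {X Y : Type} (opX : (X -> Prop) -> Prop) (opY : (Y -> Prop) -> Prop)
  (W : X * Y -> Prop) : Prop :=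
  forall p, W p -> exists A B, opX A /\ opY B /\ A (fst p) /\ B (snd p) /\
    forall a b, A a -> B b -> W (a, b).

Definition tcontinuous {X Y : Type} (opX : (X -> Prop) -> Prop) (opY : (Y -> Prop) -> Prop)
  (f : X -> Y) : Prop :=
  forall V, opY V -> opX (fun x => V (f x)).

(* E is given by its underlying set Ein (a subset of R), its group law mul,
   inverse inv and identity e.  Only values on Ein matter. *)

Definition Etype (Ein : R -> Prop) : Type := {x : R | Ein x}.

Definition opE (Ein : R -> Prop) (U : Etype Ein -> Prop) : Prop :=
  exists V : R -> Prop, Rtopology.open_set V /\
    forall x : Etype Ein, U x <-> V (proj1_sig x).

Definition cont_on_E (Ein : R -> Prop) (f : R -> R) : Prop :=
  forall a, Ein a -> forall eps, eps > 0 -> exists d, d > 0 /\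
    forall a', Ein a' -> Rabs (a' - a) < d -> Rabs (f a' - f a) < eps.

Definition CcE (Ein : R -> Prop) (f : R -> R) : Prop :=
  cont_on_E Ein f /\
  exists K : Etype Ein -> Prop, tcompact (opE Ein) K /\
    forall x : Etype Ein, ~ K x -> f (proj1_sig x) = 0.

(* A Haar measure on E, in Bourbaki's sense: a nonzero positive
   translation-invariant linear functional on K(E). *)
Definition haar_measure (Ein : R -> Prop) (mul : R -> R -> R) (I : (R -> R) -> R) : Prop :=
  (forall f g, CcE Ein f -> CcE Ein g -> (forall x, Ein x -> f x = g x) -> I f = I g) /\
  (forall f g, CcE Ein f -> CcE Ein g -> I (fun x => f x + g x) = I f + I g) /\
  (forall c f, CcE Ein f -> I (fun x => c * f x) = c * I f) /\
  (forall f, CcE Ein f -> (forall x, Ein x -> 0 <= f x) -> 0 <= I f) /\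
  (exists f, CcE Ein f /\ I f <> 0) /\
  (forall a f, Ein a -> CcE Ein f -> I (fun x => f (mul a x)) = I f).

(* The set S is integrable for the measure h.m (m given by the functional I):
   the upper integral of h * 1_S is finite.  For the sets used below
   (S = {eps >= alpha}, closed in E) this is equivalent to the boundedness of
   I on the f in K(E) with 0 <= f <= h * 1_S. *)
Definition integrable_for (Ein : R -> Prop) (I : (R -> R) -> R) (h : R -> R)
  (S : R -> Prop) : Prop :=
  exists M, forall f, CcE Ein f ->
    (forall x, Ein x -> 0 <= f x /\ (f x <= 0 \/ (S x /\ f x <= h x))) ->
    I f <= M.

Record is_Rgroup (Ein : R -> Prop) (mul : R -> R -> R) (inv : R -> R) (e : R) : Prop := {
  rg_nat : forall n : nat, (1 <= n)%nat -> Ein (INR n);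
  rg_mul_in : forall a b, Ein a -> Ein b -> Ein (mul a b);
  rg_inv_in : forall a, Ein a -> Ein (inv a);
  rg_e_in : Ein e;
  rg_assoc : forall a b c, Ein a -> Ein b -> Ein c -> mul a (mul b c) = mul (mul a b) c;
  rg_comm : forall a b, Ein a -> Ein b -> mul a b = mul b a;
  rg_unit : forall a, Ein a -> mul e a = a;
  rg_invl : forall a, Ein a -> mul (inv a) a = e;
  rg_ordered : forall a b c, Ein a -> Ein b -> Ein c -> a <= b -> mul a c <= mul b c;
  rg_mul_cont : forall a b, Ein a -> Ein b -> forall eps, eps > 0 -> exists d, d > 0 /\
      forall a' b', Ein a' -> Ein b' -> Rabs (a' - a) < d -> Rabs (b' - b) < d ->
        Rabs (mul a' b' - mul a b) < eps;
  rg_inv_cont : cont_on_E Ein inv;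
  rg_loc_compact : locally_compact (opE Ein);
  rg_RG3 : exists (h : R -> R) (I : (R -> R) -> R),
      cont_on_E Ein h /\
      (forall a, Ein a -> 0 < h a) /\
      (forall a b, Ein a -> Ein b -> h (mul a b) = h a * h b) /\
      (exists a b, Ein a /\ Ein b /\ h a <> h b) /\
      haar_measure Ein mul I /\
      forall alpha, Ein alpha -> integrable_for Ein I h (fun x => alpha <= x)
}.

Record is_action {X : Type} (Ein : R -> Prop) (mul : R -> R -> R) (e : R)
  (H : R -> X -> X) : Prop := {
  act_bij : forall eps, Ein eps ->
      (forall x y, H eps x = H eps y -> x = y) /\ (forall y, exists x, H eps x = y);
  act_mul : forall eps eps' x, Ein eps -> Ein eps' -> H eps (H eps' x) = H (mul eps eps') x;
  act_e : forall x, H e x = x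
}.

Definition action_continuous {X : Type} (Ein : R -> Prop) (opX : (X -> Prop) -> Prop)
  (H : R -> X -> X) : Prop :=
  tcontinuous (prod_top (opE Ein) opX) opX
    (fun p : Etype Ein * X => H (proj1_sig (fst p)) (snd p)).

Definition absorbs {X : Type} (Ein : R -> Prop) (inv : R -> R) (H : R -> X -> X)
  (T S : X -> Prop) : Prop :=
  exists alpha, Ein alpha /\ forall eps, Ein eps -> eps <= alpha ->
    forall y, S y -> T (H (inv eps) y).

Definition absorbent {X : Type} (Ein : R -> Prop) (inv : R -> R) (H : R -> X -> X)
  (T : X -> Prop) : Prop :=
  forall x, absorbs Ein inv H T (fun y => y = x).

Definition balanced {X : Type} (Ein : R -> Prop) (inv : R -> R) (e : R) (H : R -> X -> X)
  (T : X -> Prop) : Prop :=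
  forall eps, Ein eps -> eps <= e -> forall y, T y -> T (H (inv eps) y).

Definition ABS {X : Type} (Ein : R -> Prop) (inv : R -> R) (opX : (X -> Prop) -> Prop)
  (H : R -> X -> X) (omega : X) : Prop :=
  forall V, tnbhd opX V omega -> forall x, exists U alpha,
    tnbhd opX U x /\ Ein alpha /\
    forall eps, Ein eps -> eps <= alpha -> forall y, U y -> V (H (inv eps) y).

Definition act_bounded {X : Type} (Ein : R -> Prop) (inv : R -> R) (opX : (X -> Prop) -> Prop)
  (H : R -> X -> X) (omega : X) (T : X -> Prop) : Prop :=
  forall V, tnbhd opX V omega -> absorbs Ein inv H V T.

Definition elementary {X : Type} (Ein : R -> Prop) (inv : R -> R) (e : R)
  (opX : (X -> Prop) -> Prop) (H : R -> X -> X) (omega : X) (T : X -> Prop) : Prop :=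
  balanced Ein inv e H T /\ relatively_compact opX T /\ tnbhd opX T omega.

Definition act_image {X : Type} (f : X -> X) (S : X -> Prop) : X -> Prop :=
  fun z => exists y, S y /\ z = f y.

(* Every H_d fixes the center: by (ABS) at omega, for small eps the point
   H_{eps^-1} omega and its image under H_d both lie in any prescribed
   neighbourhood of omega, so H_d omega cannot be separated from omega.
   Hence the homeomorphisms H_d preserve neighbourhoods of omega, and the
   union of the H_{eps^-1}(U), eps <= min(alpha, e), with U and alpha given
   by (ABS) for V at omega, is a balanced neighbourhood inside V.  A
   relatively compact set is covered by finitely many of the open sets
   given by (ABS), hence bounded; conversely a bounded set lies in some
   H_a(F), F a balanced neighbourhood inside a compact one, and H_a maps
   the compact closure of F onto a compact set.  Since n^-1 becomes
   arbitrarily small in E, boundedness and absorbency of an elementary F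
   give (iii). *)

From Stdlib Require Import Reals Lra List Classical.
Open Scope R_scope.

Section Topology.

Context {X : Type} (op : (X -> Prop) -> Prop).

Lemma tnbhd_open (U : X -> Prop) x : op U -> U x -> tnbhd op U x.
Proof. intros; exists U; auto. Qed.

Lemma tnbhd_point (V : X -> Prop) x : tnbhd op V x -> V x.
Proof. intros [U [_ [Ux HUV]]]; auto. Qed.

Lemma tnbhd_sub (V W : X -> Prop) x :
  tnbhd op V x -> (forall y, V y -> W y) -> tnbhd op W x.
Proof. intros [U [HU [Ux HUV]]] HVW; exists U; auto. Qed.

Lemma closure_subset (S : X -> Prop) x : S x -> tclosure op S x.
Proof. intros Sx V HV; exists x; split; [eapply tnbhd_point|]; eauto. Qed.

Lemma closure_min (S C : X -> Prop) :
  op (fun x => ~ C x) -> (forall x, S x -> C x) -> forall x, tclosure op S x -> C x.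
Proof.
  intros HC HSC x Hx. apply NNPP; intro nCx.
  destruct (Hx _ (tnbhd_open _ _ HC nCx)) as [y [nCy Sy]]; auto.
Qed.

Lemma compact_closed_sub (C K : X -> Prop) :
  op (fun x => ~ C x) -> tcompact op K -> (forall x, C x -> K x) -> tcompact op C.
Proof.
  intros HC HK HCK I U HU Hcov.
  destruct (HK (option I) (fun o => match o with Some i => U i | None => fun x => ~ C x end))
    as [l Hl].
  - intros [i|]; auto.
  - intros x Kx. destruct (classic (C x)) as [Cx|nCx].
    + destruct (Hcov x Cx) as [i Hi]; exists (Some i); auto.
    + exists None; auto.
  - exists (flat_map (fun o => match o with Some i => i :: nil | None => nil end) l).
    intros x Cx. destruct (Hl x (HCK x Cx)) as [[i|] [Hin Hx]]; [|contradiction].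
    exists i; split; auto. apply in_flat_map; exists (Some i); simpl; auto.
Qed.

Lemma compact_image (f : X -> X) (K : X -> Prop) :
  (forall U, op U -> op (fun x => U (f x))) -> tcompact op K -> tcompact op (act_image f K).
Proof.
  intros Hf HK I U HU Hcov.
  destruct (HK I (fun i x => U i (f x))) as [l Hl]; auto.
  - intros x Kx; apply Hcov; exists x; auto.
  - exists l; intros z [y [Ky ->]]; auto.
Qed.

Hypothesis top : is_topology op.

Lemma open_of_locally_open (P : X -> Prop) :
  (forall x, P x -> exists U, op U /\ U x /\ forall y, U y -> P y) -> op P.
Proof.
  destruct top as [_ [_ [_ [op_union op_ext]]]]; intros HP.
  apply (op_ext (fun x => exists i : {U | op U /\ forall y, U y -> P y}, proj1_sig i x)).
  - intros x; split.
    + intros [i Ux]; exact (proj2 (proj2_sig i) x Ux).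
    + intros Px; destruct (HP x Px) as [U [HU [Ux HUP]]].
      exists (exist _ U (conj HU HUP)); exact Ux.
  - apply op_union; intros i; exact (proj1 (proj2_sig i)).
Qed.

Lemma open_not_closure (S : X -> Prop) : op (fun x => ~ tclosure op S x).
Proof.
  apply open_of_locally_open; intros x Hx.
  apply not_all_ex_not in Hx as [V HV]; apply imply_to_and in HV as [[U [HU [Ux HUV]]] HnS].
  exists U; repeat split; auto; intros y Uy Hcl.
  destruct (Hcl U (tnbhd_open _ _ HU Uy)) as [z [Uz Sz]]; eauto.
Qed.

Lemma open_inter_list (J : Type) (f : J -> X -> Prop) x (l : list J) :
  (forall j, In j l -> op (f j) /\ f j x) ->
  exists U, op U /\ U x /\ forall j, In j l -> forall z, U z -> f j z.
Proof.
  destruct top as [op_full [_ [op_inter _]]].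
  induction l as [|j l IH]; intros Hl.
  - exists (fun _ => True); repeat split; auto; intros j [].
  - destruct IH as [U [HU [Ux HUl]]]; [intros k Hk; apply Hl; simpl; auto|].
    destruct (Hl j (or_introl eq_refl)) as [Hj Hjx].
    exists (fun z => f j z /\ U z); repeat split; auto.
    intros k [<-|Hk] z [Hz1 Hz2]; eauto.
Qed.

Lemma open_not_compact (K : X -> Prop) :
  hausdorff op -> tcompact op K -> op (fun x => ~ K x).
Proof.
  intros Hh HK. apply open_of_locally_open; intros x nKx.
  pose (Sep := {p : (X -> Prop) * (X -> Prop) |
                op (fst p) /\ op (snd p) /\ fst p x /\ forall z, fst p z -> snd p z -> False}).
  destruct (HK Sep (fun i => snd (proj1_sig i))) as [l Hl].
  - intros i; exact (proj1 (proj2 (proj2_sig i))).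
  - intros y Ky. assert (Hxy : x <> y) by (intros ->; auto).
    destruct (Hh x y Hxy) as [U [V [HU [HV [Ux [Vy Hd]]]]]].
    exists (exist _ (U, V) (conj HU (conj HV (conj Ux Hd)))); exact Vy.
  - destruct (open_inter_list _ (fun i => fst (proj1_sig i)) x l) as [U [HU [Ux HUl]]].
    { intros i _; destruct (proj2_sig i) as [H1 [_ [H3 _]]]; auto. }
    exists U; repeat split; auto; intros z Uz Kz.
    destruct (Hl z Kz) as [i [Hin Hz]].
    exact (proj2 (proj2 (proj2 (proj2_sig i))) z (HUl _ Hin z Uz) Hz).
Qed.

Lemma relatively_compact_sub (S K : X -> Prop) :
  hausdorff op -> tcompact op K -> (forall x, S x -> K x) -> relatively_compact op S.
Proof.
  intros Hh HK HSK. apply (compact_closed_sub _ K); auto.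
  - apply open_not_closure.
  - apply closure_min; auto; apply open_not_compact; auto.
Qed.

End Topology.

Lemma Rmin_in (P : R -> Prop) a b : P a -> P b -> P (Rmin a b).
Proof. unfold Rmin; destruct Rle_dec; auto. Qed.

Lemma exists_pos_nat_ge (r : R) : exists n : nat, (1 <= n)%nat /\ r <= INR n.
Proof.
  destruct (INR_unbounded (Rmax r 1)) as [n Hn].
  pose proof (Rmax_l r 1); pose proof (Rmax_r r 1).
  exists n; split; [|lra].
  destruct n; [simpl in Hn; lra | apply le_n_S, le_0_n].
Qed.

Section RGroup.

Variables (Ein : R -> Prop) (mul : R -> R -> R) (inv : R -> R) (e : R).
Hypothesis G : is_Rgroup Ein mul inv e.

Let mul_in := rg_mul_in _ _ _ _ G.
Let inv_in := rg_inv_in _ _ _ _ G.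
Let e_in := rg_e_in _ _ _ _ G.
#[local] Hint Resolve mul_in inv_in e_in : core.

Let mulC := rg_comm _ _ _ _ G.
Let mulA := rg_assoc _ _ _ _ G.
Let mul1g := rg_unit _ _ _ _ G.
Let mulVg := rg_invl _ _ _ _ G.

Lemma mulg1 a : Ein a -> mul a e = a.
Proof. intros Ha; rewrite mulC; auto. Qed.

Lemma mulgV a : Ein a -> mul a (inv a) = e.
Proof. intros Ha; rewrite mulC; auto. Qed.

Lemma inv_unique c a : Ein c -> Ein a -> mul c a = e -> c = inv a.
Proof.
  intros Hc Ha Hca.
  rewrite <- (mulg1 c Hc), <- (mulgV a Ha), mulA, Hca; auto.
Qed.

Lemma invgK a : Ein a -> inv (inv a) = a.
Proof. intros Ha; symmetry; apply inv_unique; auto; apply mulgV; auto. Qed.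

Lemma invgM a b : Ein a -> Ein b -> inv (mul a b) = mul (inv a) (inv b).
Proof.
  intros Ha Hb; symmetry; apply inv_unique; auto.
  rewrite <- mulA, (mulC a b), (mulA (inv b)), mulVg, mul1g; auto.
Qed.

Lemma le_inv a b : Ein a -> Ein b -> a <= b -> inv b <= inv a.
Proof.
  intros Ha Hb Hab.
  pose proof (rg_ordered _ _ _ _ G a b (mul (inv a) (inv b)) Ha Hb ltac:(auto) Hab) as Hle.
  rewrite (mulA a), (mulC (inv a) (inv b)), (mulA b), mulgV, mulgV, !mul1g in Hle; auto.
Qed.

Lemma le_mulr_inv a b d : Ein a -> Ein b -> Ein d -> a <= mul b d -> mul a (inv d) <= b.
Proof.
  intros Ha Hb Hd Hle.
  pose proof (rg_ordered _ _ _ _ G a (mul b d) (inv d) Ha ltac:(auto) ltac:(auto) Hle) as Ho.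
  rewrite <- mulA, mulgV, mulg1 in Ho; auto.
Qed.

Lemma exists_inv_nat_le a : Ein a ->
  exists n : nat, (1 <= n)%nat /\ Ein (INR n) /\ inv (INR n) <= a.
Proof.
  intros Ha; destruct (exists_pos_nat_ge (inv a)) as [n [Hn Hle]].
  pose proof (rg_nat _ _ _ _ G n Hn) as HnE.
  exists n; repeat split; auto.
  rewrite <- (invgK a Ha); apply le_inv; auto.
Qed.

Section Action.

Variables (X : Type) (opX : (X -> Prop) -> Prop) (H : R -> X -> X) (omega : X).
Hypotheses (top : is_topology opX) (lc : locally_compact opX)
  (act : is_action Ein mul e H) (cont : action_continuous Ein opX H)
  (absorb : ABS Ein inv opX H omega).

Lemma open_preimage_act d U : Ein d -> opX U -> opX (fun x => U (H d x)).
Proof.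
  intros Hd HU; apply open_of_locally_open; auto; intros x Hx.
  destruct (cont U HU (exist _ d Hd, x) Hx) as [A [B [_ [HB [Ad [Bx HAB]]]]]].
  exists B; repeat split; auto; intros y By; exact (HAB _ y Ad By).
Qed.

Lemma actVK d x : Ein d -> H (inv d) (H d x) = x.
Proof. intros Hd; rewrite (act_mul _ _ _ _ act), mulVg; auto; apply (act_e _ _ _ _ act). Qed.

Lemma actKV d x : Ein d -> H d (H (inv d) x) = x.
Proof. intros Hd; rewrite (act_mul _ _ _ _ act), mulgV; auto; apply (act_e _ _ _ _ act). Qed.

Lemma act_center d : Ein d -> H d omega = omega.
Proof.
  intros Hd; apply NNPP; intro Hne.
  destruct (proj1 lc _ _ Hne) as [W [U [HW [HU [Wd [Uo HWU]]]]]].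
  pose proof (open_preimage_act d W Hd HW) as HWd.
  destruct (absorb _ (tnbhd_open _ _ _ HWd Wd) omega) as [U1 [a1 [HU1 [Ha1 H1]]]].
  destruct (absorb _ (tnbhd_open _ _ _ HU Uo) omega) as [U2 [a2 [HU2 [Ha2 H2]]]].
  set (eps := Rmin a1 (mul a2 d)).
  assert (Heps : Ein eps) by (apply Rmin_in; auto).
  pose proof (H1 eps Heps (Rmin_l _ _) omega (tnbhd_point _ _ _ HU1)) as P1.
  pose proof (H2 (mul eps (inv d)) ltac:(auto)
                 (le_mulr_inv _ _ _ Heps Ha2 Hd (Rmin_r _ _))
                 omega (tnbhd_point _ _ _ HU2)) as P2.
  rewrite (act_mul _ _ _ _ act) in P1 by auto.
  rewrite invgM, invgK, mulC in P2 by auto.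
  exact (HWU _ P1 P2).
Qed.

Lemma tnbhd_act_image d V : Ein d -> tnbhd opX V omega -> tnbhd opX (act_image (H d) V) omega.
Proof.
  intros Hd [U [HU [Uo HUV]]].
  exists (fun x => U (H (inv d) x)); split; [apply open_preimage_act; auto|]; split.
  - rewrite act_center; auto.
  - intros x Ux; exists (H (inv d) x); split; auto; rewrite actKV; auto.
Qed.

Lemma absorbent_nbhd W : tnbhd opX W omega -> absorbent Ein inv H W.
Proof.
  intros HW x; destruct (absorb W HW x) as [U [a [HU [Ha HUa]]]].
  exists a; split; auto; intros eps He Hle y ->; apply HUa; auto; eapply tnbhd_point; eauto.
Qed.

Lemma balanced_nbhd_sub V : tnbhd opX V omega ->
  exists W, tnbhd opX W omega /\ balanced Ein inv e H W /\ forall y, W y -> V y.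
Proof.
  intros HV; destruct (absorb V HV omega) as [U [a [HU [Ha HUa]]]].
  set (b := Rmin a e); assert (Hb : Ein b) by (apply Rmin_in; auto).
  assert (Hba : b <= a) by apply Rmin_l; assert (Hbe : b <= e) by apply Rmin_r.
  exists (fun y => exists eps, Ein eps /\ eps <= b /\ exists u, U u /\ y = H (inv eps) u).
  split; [|split].
  - apply tnbhd_sub with (act_image (H (inv b)) U); [apply tnbhd_act_image; auto|].
    intros y [u [Uu ->]]; exists b; split; [auto|split; [lra|exists u; auto]].
  - intros d Hd Hde y [eps [He [Hle [u [Uu ->]]]]].
    exists (mul d eps); repeat split; auto.
    + pose proof (rg_ordered _ _ _ _ G d e eps Hd ltac:(auto) He Hde) as Ho.
      rewrite mul1g in Ho; auto; lra.
    + exists u; split; auto; rewrite (act_mul _ _ _ _ act), invgM; auto.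
  - intros y [eps [He [Hle [u [Uu ->]]]]]; apply HUa; auto; lra.
Qed.

Lemma relatively_compact_bounded T :
  relatively_compact opX T -> act_bounded Ein inv opX H omega T.
Proof.
  intros HT V HV.
  pose (Absorbed := {U : X -> Prop | opX U /\ exists a, Ein a /\
          forall eps, Ein eps -> eps <= a -> forall y, U y -> V (H (inv eps) y)}).
  destruct (HT Absorbed (@proj1_sig _ _)) as [l Hl].
  - intros i; exact (proj1 (proj2_sig i)).
  - intros x _; destruct (absorb V HV x) as [U [a [[U0 [HU0 [U0x HU0U]]] [Ha HUa]]]].
    exists (exist _ U0 (conj HU0 (ex_intro _ a (conj Ha
      (fun eps He Hle y Hy => HUa eps He Hle y (HU0U y Hy)))))); exact U0x.
  - assert (Hmin : forall l' : list Absorbed, exists a, Ein a /\ forall i, In i l' ->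
              forall eps, Ein eps -> eps <= a -> forall y, proj1_sig i y -> V (H (inv eps) y)).
    { induction l' as [|i l' [a [Ha Hal]]].
      - exists e; split; auto; intros i [].
      - destruct (proj2_sig i) as [_ [b [Hb HUb]]].
        pose proof (Rmin_l a b); pose proof (Rmin_r a b).
        exists (Rmin a b); split; [apply Rmin_in; auto|].
        intros j [<-|Hj] eps He Hle y Hy; [apply HUb|apply (Hal j Hj)]; auto; lra. }
    destruct (Hmin l) as [a [Ha Hal]]; exists a; split; auto.
    intros eps He Hle y Ty.
    destruct (Hl y (closure_subset _ _ _ Ty)) as [i [Hin Hi]]; eauto.
Qed.

Lemma exists_elementary : exists F, elementary Ein inv e opX H omega F.
Proof.
  destruct lc as [Hh Hloc]; destruct (Hloc omega) as [K [HK HKo]].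
  destruct (balanced_nbhd_sub K HKo) as [W [HWo [HWb HWK]]].
  exists W; repeat split; auto; apply (relatively_compact_sub _ top _ K); auto.
Qed.

Lemma bounded_relatively_compact T :
  act_bounded Ein inv opX H omega T -> relatively_compact opX T.
Proof.
  intros HT; destruct exists_elementary as [F [_ [HFc HFo]]].
  destruct (HT F HFo) as [a [Ha HTa]].
  assert (HFa : tcompact opX (act_image (H a) (tclosure opX F))).
  { apply compact_image; auto; intros U; apply open_preimage_act; auto. }
  apply (compact_closed_sub _ _ _ (open_not_closure _ top T) HFa).
  intros x Hx; exists (H (inv a) x); split; [|rewrite actKV; auto].
  apply (closure_min opX T (fun y => tclosure opX F (H (inv a) y))); auto.
  - apply (open_preimage_act _ (fun z => ~ tclosure opX F z)); auto.
    apply open_not_closure; auto.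
  - intros y Ty; apply closure_subset, HTa; auto; lra.
Qed.

Lemma elementary_images_sub F V :
  elementary Ein inv e opX H omega F -> tnbhd opX V omega ->
  exists n : nat, (1 <= n)%nat /\ forall z, act_image (H (INR n)) F z -> V z.
Proof.
  intros [_ [HFc _]] HV.
  destruct (relatively_compact_bounded F HFc V HV) as [a [Ha HFa]].
  destruct (exists_inv_nat_le a Ha) as [n [Hn [HnE Hle]]].
  exists n; split; auto; intros z [y [Fy ->]].
  rewrite <- (invgK (INR n)); auto.
Qed.

Lemma elementary_cover F x :
  elementary Ein inv e opX H omega F ->
  exists n : nat, (1 <= n)%nat /\ act_image (H (inv (INR n))) F x.
Proof.
  intros [_ [_ HFo]].
  destruct (absorbent_nbhd F HFo x) as [a [Ha HFa]].
  destruct (exists_inv_nat_le a Ha) as [n [Hn [HnE Hle]]].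
  exists n; split; auto; exists (H (INR n) x); split.
  - rewrite <- (invgK (INR n)) at 1; auto.
  - rewrite actVK; auto.
Qed.

End Action.

End RGroup.

Theorem proposition2p3
  (Ein : R -> Prop) (mul : R -> R -> R) (inv : R -> R) (e : R)
  (X : Type) (opX : (X -> Prop) -> Prop) (H : R -> X -> X) (omega : X) :
  is_Rgroup Ein mul inv e ->
  is_topology opX ->
  locally_compact opX ->
  (exists x y : X, x <> y) ->
  is_action Ein mul e H ->
  action_continuous Ein opX H ->
  ABS Ein inv opX H omega ->
  (* (i) *)
  (forall V, tnbhd opX V omega ->
     exists W, tnbhd opX W omega /\ balanced Ein inv e H W /\
       absorbent Ein inv H W /\ (forall y, W y -> V y)) /\
  (* (ii) *)
  (forall T : X -> Prop, act_bounded Ein inv opX H omega T <-> relatively_compact opX T) /\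
  (* (iii) *)
  (exists F, elementary Ein inv e opX H omega F) /\
  (forall F, elementary Ein inv e opX H omega F ->
     (forall n : nat, (1 <= n)%nat -> tnbhd opX (act_image (H (INR n)) F) omega) /\
     (forall V, tnbhd opX V omega ->
        exists n : nat, (1 <= n)%nat /\ forall z, act_image (H (INR n)) F z -> V z) /\
     (forall x, exists n : nat, (1 <= n)%nat /\ act_image (H (inv (INR n))) F x)).
Proof.
  intros G top lc _ act cont absorb.
  split; [|split; [|split]].
  - intros V HV.
    destruct (balanced_nbhd_sub _ _ _ _ G _ _ _ _ top lc act cont absorb V HV)
      as [W [HWo [HWb HWV]]].
    exists W; eauto 6 using absorbent_nbhd.
  - split; eauto using bounded_relatively_compact, relatively_compact_bounded.
  - eauto using exists_elementary.
  - intros F HF; split; [|split].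
    + intros n Hn; pose proof (rg_nat _ _ _ _ G n Hn); destruct HF as [_ [_ HFo]].
      eauto using tnbhd_act_image.
    + eauto using elementary_images_sub.
    + eauto using elementary_cover.
Qed.
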